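(* Let $h=H(s::a::b)$ and $\Upsilon\subseteq\{z,z\boxplus h\}$. Then $$G(\vdash x\boxplus h)_\ell=G(x,z\vdash x\boxplus h)_\ell=2^{-\ell},\qquad G(a,b,s,x^{\circledast\kappa h}\vdash x\boxplus h)=1,\qquad G(a,b,s,x,\Upsilon\vdash x\boxplus h)=1.$$
   Context: Hancke–Kuhn setting with security parameter $\ell$: secret $s$, counters $a,b$, public hash $H$ modeled as a random oracle (outputs indistinguishable from uniformly random, independent on distinct inputs), token $h=H(s::a::b)=h^{(0)}::h^{(1)}\in\mathbb{Z}_2^{2\ell}$; $x\in\mathbb{Z}_2^\ell$ is Victor's uniformly random challenge and $z\in\mathbb{Z}_2^\ell$ an attacker's challenge chosen independently of $x$. $(x\boxplus h)_i=h^{(x_i)}_i$. Kernel $\kappa h=\{i\mid h^{(0)}_i=h^{(1)}_i\}$; $x^{\circledast I}$ replaces bits $x_i$, $i\in I$, by a wildcard. $G(\Xi\vdash\Theta)$ is the guessing chance: maximal probability over randomized guessing procedures of outputting $\Theta$ on input $\Xi$, over the random values, as a sequence in $\ell$ considered up to negligible difference; $G(\vdash\Theta)=G(\emptyset\vdash\Theta)$. *)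

From mathcomp Require Import all_boot all_order all_algebra.
Set Implicit Arguments. Unset Strict Implicit. Unset Printing Implicit Defensive.
Import Order.TTheory GRing.Theory Num.Theory.
Local Open Scope ring_scope.

Definition bits (l : nat) := {ffun 'I_l -> bool}.

(* Tokens h in Z_2^(2l), h = h^(0) :: h^(1) (first half, second half). *)
Definition token (l : nat) := {ffun 'I_(l + l) -> bool}.

Definition hpart (l : nat) (h : token l) (c : bool) (i : 'I_l) : bool :=
  if c then h (rshift l i) else h (lshift l i).

Definition boxplus (l : nat) (x : bits l) (h : token l) : bits l :=
  [ffun i => hpart h (x i) i].

Definition kernel (l : nat) (h : token l) : {set 'I_l} :=
  [set i | hpart h false i == hpart h true i].

(* x^{circledast I}: bits with index in I replaced by a wildcard (None). *)
Definition wildcard (l : nat) (x : bits l) (I : {set 'I_l}) : {ffun 'I_l -> option bool} :=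
  [ffun i => if i \in I then None else Some (x i)].

Definition is_distr (R : numDomainType) (T : finType) (P : T -> R) :=
  (forall w, 0 <= P w) /\ \sum_w P w = 1.

Definition prob (R : numDomainType) (T : finType) (P : T -> R) (E : pred T) : R :=
  \sum_(w | E w) P w.

Definition rguesser (R : numDomainType) (I O : finType) (g : I -> O -> R) :=
  forall i, is_distr (g i).

Definition success (R : numDomainType) (T I O : finType) (P : T -> R)
  (X : T -> I) (Y : T -> O) (g : I -> O -> R) : R :=
  \sum_w P w * g (X w) (Y w).

(* G(X |- Y) = v : the maximal success probability over randomized guessing
   procedures is v (attained, and an upper bound). *)
Definition guess_chance_is (R : numDomainType) (T I O : finType) (P : T -> R)
  (X : T -> I) (Y : T -> O) (v : R) :=
  (exists2 g, rguesser g & success P X Y g = v) /\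
  (forall g, rguesser g -> success P X Y g <= v).

From mathcomp Require Import all_boot all_order all_algebra.
Import Order.TTheory GRing.Theory Num.Theory.
Local Open Scope ring_scope.
Set Implicit Arguments. Unset Strict Implicit. Unset Printing Implicit Defensive.

(* Each token t with [boxplus u t = o] is fixed on the half selected by u and
   free on the other half, so exactly 2^l of the 2^(2l) tokens map u to o.
   Hence when h is uniform given (x, z), the response x [+] h is uniform given
   (x, z), and no guesser, whatever it sees of x and z, beats 2^-l.  On the
   other hand x [+] h is a function of (s, a, b) together with either x, or
   x outside the kernel of h (inside the kernel both halves of h agree), so
   those observations determine it and are guessed with certainty. *)

Section FiniteProbability.
Variables (R : numDomainType) (T : finType) (P : T -> R).

Lemma prob_partition (I : finType) (X : T -> I) (E : pred T) :
  prob P E = \sum_i prob P (fun w => (X w == i) && E w).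
Proof.
rewrite /prob (partition_big X predT) //=; apply: eq_bigr => i _.
by apply: eq_bigl => w; rewrite andbC.
Qed.

Hypothesis distrP : is_distr P.

Lemma sum_prob_eq (I : finType) (X : T -> I) :
  \sum_i prob P (fun w => X w == i) = 1.
Proof.
case: distrP => _ <-; rewrite [RHS](prob_partition X predT).
by apply: eq_bigr => i _; apply: eq_bigl => w; rewrite andbT.
Qed.

Lemma prob_const_of_cond (I : finType) (X : T -> I) (E : pred T) (c : R) :
  (forall i, prob P (fun w => (X w == i) && E w) = c * prob P (fun w => X w == i)) ->
  prob P E = c.
Proof.
move=> condE; rewrite (prob_partition X) (eq_bigr _ (fun i _ => condE i)).
by rewrite -big_distrr /= sum_prob_eq mulr1.
Qed.

End FiniteProbability.

Section Guessing.
Variables (R : numDomainType) (T I O : finType) (P : T -> R).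
Variables (X : T -> I) (Y : T -> O).

Lemma rguesser_le1 (g : I -> O -> R) i o : rguesser g -> g i o <= 1.
Proof.
move=> /(_ i) [g_ge0 <-]; rewrite (bigD1 o) //= lerDl.
exact: sumr_ge0.
Qed.

Lemma success_le1 g : is_distr P -> rguesser g -> success P X Y g <= 1.
Proof.
move=> [P_ge0 <-] rg; apply: ler_sum => w _.
by rewrite -[leRHS]mulr1 ler_wpM2l // rguesser_le1.
Qed.

Lemma success_partition g :
  success P X Y g = \sum_i \sum_o g i o * prob P (fun w => (X w == i) && (Y w == o)).
Proof.
rewrite /success (partition_big X predT) //=; apply: eq_bigr => i _.
rewrite (partition_big Y predT) //=; apply: eq_bigr => o _.
rewrite /prob big_distrr /=; apply: eq_big => [w|w /andP[/eqP-> /eqP->]].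
  by rewrite andbC.
by rewrite mulrC.
Qed.

Definition dguesser (f : I -> O) : I -> O -> R := fun i o => (o == f i)%:R.

Lemma rguesser_dguesser f : rguesser (dguesser f).
Proof.
move=> i; split=> [o|]; first exact: ler0n.
by rewrite /dguesser (bigD1 (f i)) //= eqxx big1 ?addr0 // => o /negPf ->.
Qed.

Hypothesis distrP : is_distr P.

Lemma guess_chance_is_determined (f : I -> O) :
  (forall w, f (X w) = Y w) -> guess_chance_is P X Y 1.
Proof.
move=> fXY; split=> [|g]; last exact: success_le1.
exists (dguesser f); first exact: rguesser_dguesser.
case: distrP => _ <-; apply: eq_bigr => w _.
by rewrite /dguesser fXY eqxx mulr1.
Qed.

Section ConditionallyUniform.
Variable c : R.
Hypothesis condY :
  forall i o, prob P (fun w => (X w == i) && (Y w == o)) = c * prob P (fun w => X w == i).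

Lemma success_cond_const g : rguesser g -> success P X Y g = c.
Proof.
move=> rg; rewrite success_partition -[RHS]mulr1 -(sum_prob_eq distrP X) big_distrr.
apply: eq_bigr => i _; under eq_bigr do rewrite condY mulrCA.
by rewrite -big_distrr -big_distrl /= (proj2 (rg i)) mul1r.
Qed.

Lemma guess_chance_is_cond_const (o0 : O) : guess_chance_is P X Y c.
Proof.
split=> [|g /success_cond_const -> //].
exists (dguesser (fun=> o0)); first exact: rguesser_dguesser.
exact/success_cond_const/rguesser_dguesser.
Qed.

End ConditionallyUniform.
End Guessing.

Section Tokens.
Variable l : nat.

Definition token_of (u o y : bits l) : token l :=
  [ffun k => match split k with
             | inl i => if u i then y i else o i
             | inr i => if u i then o i else y i
             end].

Lemma hpart_token_of u o y c i :
  hpart (token_of u o y) c i = if c == u i then o i else y i.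
Proof.
by rewrite /hpart; case: c; rewrite !ffunE ?(unsplitK (inl i)) ?(unsplitK (inr i)); case: (u i).
Qed.

Lemma token_of_boxplus (u : bits l) (t : token l) :
  t = token_of u (boxplus u t) [ffun i => hpart t (~~ u i) i].
Proof.
apply/ffunP => k; rewrite -(splitK k).
by case: (split k) => i; rewrite !ffunE unsplitK !ffunE /hpart; case: (u i).
Qed.

Lemma card_boxplus_preimage (u o : bits l) :
  #|[set t : token l | boxplus u t == o]| = (2 ^ l)%N.
Proof.
have -> : [set t : token l | boxplus u t == o] = token_of u o @: [set: bits l].
  apply/setP => t; rewrite inE; apply/eqP/imsetP => [<-|[y _ ->]].
    by exists [ffun i => hpart t (~~ u i) i]; rewrite ?inE // -token_of_boxplus.
  by apply/ffunP => i; rewrite ffunE hpart_token_of eqxx.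
rewrite card_imset ?cardsT ?card_ffun ?card_bool ?card_ord // => y1 y2 eq_y.
apply/ffunP => i; have := congr1 (fun t => hpart t (~~ u i) i) eq_y.
by rewrite /= !hpart_token_of; case: (u i).
Qed.

End Tokens.

Lemma boxplus_cond_uniform (R : numFieldType) (T I : finType) (P : T -> R) (l : nat)
    (h : T -> token l) (x : T -> bits l) (C : T -> I) :
  (forall t u c, prob P (fun w => [&& h w == t, x w == u & C w == c])
                 = 2 ^- (l + l) * prob P (fun w => (x w == u) && (C w == c))) ->
  forall i o, prob P (fun w => ((x w, C w) == i) && (boxplus (x w) (h w) == o))
              = 2 ^- l * prob P (fun w => (x w, C w) == i).
Proof.
move=> h_unif [u c] o.
have prob_h t : prob P (fun w => (h w == t) &&
                                   (((x w, C w) == (u, c)) && (boxplus (x w) (h w) == o)))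
                = if boxplus u t == o
                  then prob P (fun w => [&& h w == t, x w == u & C w == c]) else 0.
  rewrite /prob; case: (boxplus u t =P o) => [box_t|box_t]; last first.
    rewrite big_pred0 // => w; rewrite xpair_eqE.
    case: (h w =P t) => //= ->; case: (x w =P u) => //= ->.
    by rewrite (introF eqP box_t) andbF.
  apply: eq_bigl => w; rewrite xpair_eqE.
  case: (h w =P t) => //= ->; case: (x w =P u) => //= ->.
  by rewrite box_t eqxx andbT.
rewrite (prob_partition P h) (eq_bigr _ (fun t _ => prob_h t)) -big_mkcond.
rewrite (eq_bigr _ (fun t _ => h_unif t u c)) sumr_const -cardsE card_boxplus_preimage.
by rewrite -mulrnAl -mulr_natr natrX exprD invfM divfK ?expf_neq0 ?pnatr_eq0.
Qed.

Definition boxplus_wild (l : nat) (y : {ffun 'I_l -> option bool}) (h : token l) : bits l :=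
  [ffun i => hpart h (odflt false (y i)) i].

Lemma boxplus_wildcard_kernel (l : nat) (x : bits l) (h : token l) :
  boxplus_wild (wildcard x (kernel h)) h = boxplus x h.
Proof.
apply/ffunP => i; rewrite !ffunE; case: ifP => //.
by rewrite inE => /eqP ker_i; case: (x i).
Qed.

Theorem lemma6p3 (R : realFieldType) (l : nat) (S A B : finType)
  (H : S -> A -> B -> token l)
  (Omega : finType) (P : Omega -> R)
  (s : Omega -> S) (a : Omega -> A) (b : Omega -> B) (x z : Omega -> bits l)
  (in_z in_zh : bool) :
  let h := fun w => H (s w) (a w) (b w) in
  is_distr P ->
  (* Victor's challenge x is uniformly random *)
  (forall u, prob P (fun w => x w == u) = 2 ^- l) ->
  (* the attacker's challenge z is independent of x *)
  (forall u v, prob P (fun w => (x w == u) && (z w == v))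
               = prob P (fun w => x w == u) * prob P (fun w => z w == v)) ->
  (* random oracle: h = H(s::a::b) is uniform and independent of (x, z) *)
  (forall t u v, prob P (fun w => [&& h w == t, x w == u & z w == v])
               = 2 ^- (l + l) * prob P (fun w => (x w == u) && (z w == v))) ->
  let Y := fun w => boxplus (x w) (h w) in
  (* Upsilon, a subset of {z, z [+] h} *)
  let Ups := fun w => (if in_z then Some (z w) else None,
                       if in_zh then Some (boxplus (z w) (h w)) else None) in
  [/\ guess_chance_is P (fun _ => tt) Y (2 ^- l),
      guess_chance_is P (fun w => (x w, z w)) Y (2 ^- l),
      guess_chance_is P (fun w => (a w, b w, s w, wildcard (x w) (kernel (h w)))) Y 1
    & guess_chance_is P (fun w => (a w, b w, s w, x w, Ups w)) Y 1].
Proof.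
move=> h distrP _ _ h_unif Y Ups.
have condY := boxplus_cond_uniform h_unif.
split.
- apply: (guess_chance_is_cond_const distrP _ [ffun=> false]) => -[] o.
  have -> : prob P (fun=> tt == tt) = 1 by case: distrP.
  by rewrite mulr1; apply: (prob_const_of_cond distrP (condY^~ o)).
- exact: (guess_chance_is_cond_const distrP condY [ffun=> false]).
- apply: (guess_chance_is_determined distrP
    (f := fun '(a', b', s', y) => boxplus_wild y (H s' a' b'))) => w.
  exact: boxplus_wildcard_kernel.
- exact: (guess_chance_is_determined distrP
    (f := fun '(a', b', s', x', _) => boxplus x' (H s' a' b'))).
Qed.
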